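(* Let $\mathcal{C}$ be a finite set of classes with $|\mathcal{C}| = C$, let $\mathcal{X}$ be a domain of datapoints, and let $(X, Y, \tilde{Y})$ be random variables with $(X,Y)$ distributed according to a prior $Q_{X,Y}$ on $\mathcal{X}\times\mathcal{C}$ and $\tilde{Y}$ taking values in $\mathcal{C}$. Assume: (i) (independent noise) $X$ is independent of $\tilde{Y}$ conditioning on $Y$; (ii) (informative noisy label) the $C\times C$ noise transition matrix $\mathbf{T}_{Y\rightarrow\tilde{Y}}$, with entries $\mathbf{T}_{Y\rightarrow\tilde{Y}}(y,\tilde{y}) = \Pr[\tilde{Y}=\tilde{y}\mid Y=y]$, is invertible. For a (randomized) classifier $h$ and a $\mathcal{C}$-valued random variable $Z\in\{Y,\tilde Y\}$, define $$\mathcal{L}_{\mathrm{DMI}}(Q_{h(X),Z}) := -\log\bigl(|\det(\mathbf{Q}_{h(X),Z})|\bigr),$$ where $\mathbf{Q}_{h(X),Z}$ is the $C\times C$ matrix with entries $\mathbf{Q}_{h(X),Z}(c,z) = \Pr[h(X)=c, Z=z]$. Then: 1. (legal) If there exists a ground truth classifier $h^*$ with $h^*(X)=Y$, then for every classifier $h$, $\mathcal{L}_{\mathrm{DMI}}(Q_{h^*(X),\tilde{Y}})\le \mathcal{L}_{\mathrm{DMI}}(Q_{h(X),\tilde{Y}})$, and the inequality is strict when $h(X)$ is not a permutation of $h^*(X)$, i.e. when there is no permutation $\pi:\mathcal{C}\to\mathcal{C}$ with $h(x)=\pi(h^*(x))$ for all $x\in\mathcal{X}$. 2. (noise-robust)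 For the set $\mathcal{H}$ of all possible classifiers, $$\arg\min_{h\in\mathcal{H}}\mathcal{L}_{\mathrm{DMI}}(Q_{h(X),\tilde{Y}}) = \arg\min_{h\in\mathcal{H}}\mathcal{L}_{\mathrm{DMI}}(Q_{h(X),Y}),$$ and in fact there is a constant $\alpha$ (not depending on $h$) such that for every classifier $h$, $\mathcal{L}_{\mathrm{DMI}}(Q_{h(X),\tilde{Y}}) = \mathcal{L}_{\mathrm{DMI}}(Q_{h(X),Y}) + \alpha$. 3. (information-monotone) For every two classifiers $h,h'$, if $h'(X)$ is independent of $Y$ conditioning on $h(X)$, then $\mathcal{L}_{\mathrm{DMI}}(Q_{h(X),\tilde{Y}})\le\mathcal{L}_{\mathrm{DMI}}(Q_{h'(X),\tilde{Y}})$.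
   Context: A (randomized) classifier is a map $h:\mathcal{X}\to\Delta_{\mathcal{C}}$, where $\Delta_{\mathcal{C}}$ is the set of probability distributions over $\mathcal{C}$; given $x$, $h(x)_c$ is the probability that $h$ maps $x$ to class $c$. The random variable $h(X)$ takes value $c$ with probability $h(X)_c$ given $X$, and, fixing the input $x$, the randomness of the classifier is independent of everything else (in particular of $Y$ and $\tilde{Y}$). The convention $-\log 0 = +\infty$ is used when the determinant vanishes. *)

From HB Require Import structures.
From mathcomp Require Import all_boot all_order all_algebra all_fingroup.
From mathcomp Require Import all_classical all_reals all_analysis.
Set Implicit Arguments. Unset Strict Implicit. Unset Printing Implicit Defensive.
Import Order.TTheory GRing.Theory Num.Theory.
Local Open Scope classical_set_scope.
Local Open Scope ring_scope.

(* A (randomized) classifier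
   h : Xd -> 'I_C -> R maps a datapoint x to a probability vector (h x c)_c
   (measurable in x so that the probabilities below are defined). *)
Definition is_classifier (R : realType) (dX : measure_display)
  (Xd : measurableType dX) (C : nat) (h : Xd -> 'I_C -> R) : Prop :=
  [/\ (forall x c, 0 <= h x c),
      (forall x, \sum_(c < C) h x c = 1) &
      (forall c, measurable_fun setT (fun x => h x c))].

(* Pr[h(X) = c, Z = z] = E[ h(X)_c 1{Z = z} ] (the classifier's randomness is
   independent of everything else given its input). *)
Definition PrhZ (R : realType) (d : measure_display) (Omega : measurableType d)
  (P : probability Omega R) (dX : measure_display) (Xd : measurableType dX)
  (C : nat) (X : Omega -> Xd) (h : Xd -> 'I_C -> R) (Z : Omega -> 'I_C)
  (c z : 'I_C) : R :=
  fine (\int[P]_(w in [set w | Z w = z]) (h (X w) c)%:E)%E.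

Definition Qmx (R : realType) (d : measure_display) (Omega : measurableType d)
  (P : probability Omega R) (dX : measure_display) (Xd : measurableType dX)
  (C : nat) (X : Omega -> Xd) (h : Xd -> 'I_C -> R) (Z : Omega -> 'I_C)
  : 'M[R]_C := \matrix_(c, z) PrhZ P X h Z c z.

Definition LDMI (R : realType) (C : nat) (M : 'M[R]_C) : \bar R :=
  if \det M == 0 then +oo%E else (- ln `|\det M|)%:E.

(* noise transition matrix T(y,yt) = Pr[Yt = yt | Y = y]
   (with the MathComp convention x / 0 = 0) *)
Definition Tmx (R : realType) (d : measure_display) (Omega : measurableType d)
  (P : probability Omega R) (C : nat) (Y Yt : Omega -> 'I_C) : 'M[R]_C :=
  \matrix_(y, yt) (fine (P [set w | Y w = y /\ Yt w = yt]) /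
                   fine (P [set w | Y w = y])).

Definition cond_indep_X_Yt (R : realType) (d : measure_display)
  (Omega : measurableType d) (P : probability Omega R) (dX : measure_display)
  (Xd : measurableType dX) (C : nat) (X : Omega -> Xd) (Y Yt : Omega -> 'I_C)
  : Prop :=
  forall (A : set Xd) (y yt : 'I_C), measurable A ->
    (P [set w | X w \in A /\ Y w = y /\ Yt w = yt] * P [set w | Y w = y] =
     P [set w | X w \in A /\ Y w = y] * P [set w | Y w = y /\ Yt w = yt])%E.

(* h'(X) independent of Y conditionally on h(X), for randomized classifiers
   h, h' whose randomness is independent given X. *)
Definition cond_indep_h'_Y (R : realType) (d : measure_display)
  (Omega : measurableType d) (P : probability Omega R) (dX : measure_display)
  (Xd : measurableType dX) (C : nat) (X : Omega -> Xd) (Y : Omega -> 'I_C)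
  (h h' : Xd -> 'I_C -> R) : Prop :=
  forall c c' y : 'I_C,
    fine (\int[P]_(w in [set w | Y w = y]) (h (X w) c * h' (X w) c')%:E)%E *
    fine (\int[P]_(w in setT) (h (X w) c)%:E)%E =
    fine (\int[P]_(w in setT) (h (X w) c * h' (X w) c')%:E)%E *
    fine (\int[P]_(w in [set w | Y w = y]) (h (X w) c)%:E)%E.

(* Conditional independence of X and Yt given Y factors the joint matrix through
   the noise: Q_{h(X),Yt} = Q_{h(X),Y} T, so the noise only shifts L_DMI by
   -log |det T|.  Next, Q_{h(X),Y}^T = diag(Pr[Y = y]) N_h, where N_h is the
   row-stochastic matrix of conditional laws of h(X) given Y.  A nonnegative
   matrix whose rows sum to at most 1 has |det| <= 1 (expand the product of the
   row sums), and a row-stochastic one reaches 1 only if it is a permutation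
   matrix; the ground truth has N_{h*} = 1, which gives legality.  Finally, if
   h'(X) is independent of Y given h(X), then Q_{h'(X),Y} = W Q_{h(X),Y} where
   W(c',c) = Pr[h'(X) = c' | h(X) = c] has columns summing to at most 1, which
   gives information monotonicity. *)

From HB Require Import structures.
From mathcomp Require Import all_boot all_order all_algebra all_fingroup.
From mathcomp Require Import all_classical all_reals all_analysis.
From mathcomp Require Import measurable_realfun.
Set Implicit Arguments. Unset Strict Implicit. Unset Printing Implicit Defensive.
Import Order.TTheory GRing.Theory Num.Theory.
Local Open Scope classical_set_scope.
Local Open Scope ring_scope.

Section stochastic_matrices.
Variables (R : realDomainType) (n : nat) (N : 'M[R]_n).
Hypothesis N_ge0 : forall i j, 0 <= N i j.

Lemma norm_det_add_noninj_le_prod_rowsum :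
  `|\det N| + \sum_(f : {ffun 'I_n -> 'I_n} | ~~ injectiveb f) \prod_i N i (f i)
  <= \prod_i \sum_j N i j.
Proof.
rewrite bigA_distr_bigA [leRHS](bigID (fun f : {ffun 'I_n -> 'I_n} => injectiveb f)) /=.
rewrite lerD2r [leRHS](reindex_omap (val : 'S_n -> {ffun 'I_n -> 'I_n}) insub); last first.
  by move=> f f_inj; rewrite insubT.
rewrite [leRHS](eq_bigl xpredT); last by move=> s; rewrite valK eqxx andbT; exact: (valP s).
apply: le_trans (ler_norm_sum _ _ _) _; apply: ler_sum => s _.
rewrite normrM normrX normrN1 expr1n mul1r ger0_norm ?prodr_ge0 //.
by under eq_bigr do rewrite -pvalE.
Qed.

Lemma norm_det_le1 : (forall i, \sum_j N i j <= 1) -> `|\det N| <= 1.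
Proof.
move=> rowsum_le1; apply: le_trans (le_trans _ norm_det_add_noninj_le_prod_rowsum) _.
- by rewrite lerDl sumr_ge0 // => f _; rewrite prodr_ge0.
- by apply: prodr_ile1 => i _; rewrite rowsum_le1 sumr_ge0.
Qed.

Hypothesis rowsum1 : forall i, \sum_j N i j = 1.

Lemma stochastic_noninj_prod_eq0 : 1 <= `|\det N| ->
  forall f : {ffun 'I_n -> 'I_n}, ~~ injectiveb f -> \prod_i N i (f i) = 0.
Proof.
move=> det_ge1; apply/psumr_eq0P => [f _|]; first by rewrite prodr_ge0.
apply/eqP; rewrite eq_le sumr_ge0 ?andbT // => [|f _]; last by rewrite prodr_ge0.
rewrite -(lerD2l `|\det N|) addr0 (le_trans norm_det_add_noninj_le_prod_rowsum) //.
by rewrite big1.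
Qed.

(* A map following positive entries only is injective, so the positive entries
   of the rows sit in distinct columns, one per row. *)
Lemma stochastic_perm_of_noninj_prod_eq0 :
  (forall f : {ffun 'I_n -> 'I_n}, ~~ injectiveb f -> \prod_i N i (f i) = 0) ->
  exists s : 'S_n, forall i j, N i j = (s i == j)%:R.
Proof.
move=> noninj0.
have pos_inj (f : {ffun 'I_n -> 'I_n}) : (forall i, 0 < N i (f i)) -> injective f.
  move=> f_pos; apply/injectiveP/negPn/negP => /noninj0/eqP.
  by rewrite gt_eqF // prodr_gt0.
have row_pos i : exists j, 0 < N i j.
  apply/existsP; apply: contraT => /existsPn row_npos; move: (rowsum1 i).
  rewrite big1 => [/esym/eqP|j _]; first by rewrite oner_eq0.
  by apply/eqP; rewrite eq_le N_ge0 andbT leNgt row_npos.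
pose g := [ffun i => xchoose (row_pos i)].
have g_pos i : 0 < N i (g i) by rewrite ffunE (xchooseP (row_pos i)).
have g_inj : injective g by exact: pos_inj.
have [g' gK g'K] := injF_bij g_inj.
have pos_g i j : 0 < N i j -> j = g i.
  move=> Nij_pos; apply/eqP/negPn/negP => jNg.
  have g'j_neq : g' j != i by apply: contraNneq jNg => <-; rewrite g'K.
  pose f := [ffun k => if k == i then j else g k].
  have f_inj : injective f.
    by apply: pos_inj => k; rewrite ffunE; case: eqP => [->|].
  have f_g'j : f (g' j) = f i by rewrite [f _]ffunE [f i]ffunE eqxx (negbTE g'j_neq).
  by move: g'j_neq; rewrite (f_inj _ _ f_g'j) eqxx.
have Nout i j : j != g i -> N i j = 0.
  move=> jNg; apply/eqP; rewrite eq_le N_ge0 andbT leNgt.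
  by apply: contra jNg => /pos_g ->.
exists (perm g_inj) => i j; rewrite permE.
have [<-|gNj] := eqVneq (g i) j; last by rewrite Nout // eq_sym.
by rewrite -(rowsum1 i) (bigD1 (g i)) //= big1 ?addr0 // => k /Nout.
Qed.

Lemma stochastic_norm_det_ge1_perm : 1 <= `|\det N| ->
  exists s : 'S_n, forall i j, N i j = (s i == j)%:R.
Proof.
by move=> /stochastic_noninj_prod_eq0; exact: stochastic_perm_of_noninj_prod_eq0.
Qed.

End stochastic_matrices.

Section LDMI.
Variables (R : realType) (n : nat).

Lemma LDMI_mulmx (A B : 'M[R]_n) : \det B != 0 ->
  LDMI (A *m B) = (LDMI A + (- ln `|\det B|)%:E)%E.
Proof.
move=> detB_neq0; rewrite /LDMI det_mulmx mulf_eq0 (negbTE detB_neq0) orbF.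
case: ifPn => // detA_neq0.
by rewrite normrM lnM ?posrE ?normr_gt0 // opprD EFinD.
Qed.

Lemma LDMI_le (A B : 'M[R]_n) : `|\det B| <= `|\det A| -> (LDMI A <= LDMI B)%E.
Proof.
move=> detBA; rewrite /LDMI; have [|detB_neq0] := eqVneq (\det B) 0.
  by case: ifP => _; rewrite leey.
have detA_gt0 : 0 < `|\det A| by rewrite (lt_le_trans _ detBA) ?normr_gt0.
by rewrite -normr_eq0 gt_eqF // lee_fin lerN2 ler_ln // posrE normr_gt0.
Qed.

Lemma LDMI_lt (A B : 'M[R]_n) : `|\det B| < `|\det A| -> (LDMI A < LDMI B)%E.
Proof.
move=> detBA; rewrite /LDMI.
have detA_gt0 : 0 < `|\det A| by rewrite (le_lt_trans _ detBA).
rewrite -normr_eq0 gt_eqF //; have [_|detB_neq0] := eqVneq (\det B) 0; first exact: ltry.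
by rewrite lte_fin ltrN2 ltr_ln // posrE normr_gt0.
Qed.

End LDMI.

Section classifier.
Variables (R : realType) (dX : measure_display) (Xd : measurableType dX) (C : nat).
Variable h : Xd -> 'I_C -> R.
Hypothesis h_cls : is_classifier h.

Lemma classifier_le1 x c : 0 <= h x c <= 1.
Proof.
case: h_cls => h_ge0 h_sum1 _; rewrite h_ge0 -(h_sum1 x) (bigD1 c) //= lerDl.
exact: sumr_ge0.
Qed.

Lemma classifier_eq0 x c0 : h x c0 = 1 -> forall c, c != c0 -> h x c = 0.
Proof.
case: h_cls => h_ge0 h_sum1 _ hc0 c cNc0.
have : \sum_(i | i != c0) h x i = 0.
  by apply: (addrI 1); move: (h_sum1 x); rewrite (bigD1 c0) //= hc0 addr0.
by move/psumr_eq0P; apply.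
Qed.

End classifier.

Section restricted_pushforward.
Local Open Scope ereal_scope.
Variables (d : measure_display) (T : measurableType d) (R : realType).
Variable mu : {measure set T -> \bar R}.

Lemma ge0_integral_mrestr (S : set T) (mS : measurable S) (g : T -> \bar R) :
  measurable_fun setT g -> (forall x, 0 <= g x) ->
  \int[mrestr mu mS]_(x in setT) g x = \int[mu]_(x in S) g x.
Proof.
move=> mg g_ge0; rewrite -(setUv S) ge0_integral_setU //; last 3 first.
- exact: measurableC.
- by rewrite setUv.
- by rewrite disj_set2E setICr.
rewrite (eq_measure_integral mzero (D := ~` S)); last first.
  move=> A mA AS; rewrite /mzero; change (mu (A `&` S) = 0).
  suff -> : A `&` S = set0 by rewrite measure0.
  by apply/seteqP; split => // x [/AS].
rewrite integral_measure_zero adde0.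
apply: eq_measure_integral => A mA AS; change (mu (A `&` S) = mu A).
by rewrite setIidl.
Qed.

Variables (dX : measure_display) (Xd : measurableType dX) (X : T -> Xd).
Hypothesis mX : measurable_fun setT X.

(* The two sides are integrals against the finite measures
   [A |-> mu (X^-1 A & S12) * mu S1] and [A |-> mu (X^-1 A & S1) * mu S12]
   on [Xd], which the hypothesis identifies. *)
Lemma ge0_integral_comp_cross_mul (S1 S12 : set T) (f : Xd -> R) :
  measurable S1 -> measurable S12 ->
  mu S1 \is a fin_num -> mu S12 \is a fin_num ->
  (forall A, measurable A ->
     mu (X @^-1` A `&` S12) * mu S1 = mu (X @^-1` A `&` S1) * mu S12) ->
  measurable_fun setT f -> (forall x, (0 <= f x)%R) ->
  \int[mu]_(w in S12) (f (X w))%:E * mu S1 =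
  \int[mu]_(w in S1) (f (X w))%:E * mu S12.
Proof.
move=> mS1 mS12 fin1 fin12 cross mf f_ge0.
have mEf : measurable_fun setT (fun x => (f x)%:E) by exact/measurable_EFinP.
have Ef_ge0 x : 0 <= (f x)%:E by rewrite lee_fin.
have pushE S (mS : measurable S) :
    \int[mu]_(w in S) (f (X w))%:E = \int[pushforward (mrestr mu mS) X]_x (f x)%:E.
  rewrite [RHS]ge0_integral_pushforward // preimage_setT ge0_integral_mrestr //.
  - exact: measurableT_comp.
  - by move=> w; exact: Ef_ge0.
have p1_ge0 : (0 <= fine (mu S1))%R by rewrite fine_ge0.
have p12_ge0 : (0 <= fine (mu S12))%R by rewrite fine_ge0.
rewrite (pushE _ mS1) (pushE _ mS12) -(fineK fin1) -(fineK fin12).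
rewrite muleC [RHS]muleC.
rewrite -[fine (mu S1)]/((NngNum p1_ge0)%:num) -[fine (mu S12)]/((NngNum p12_ge0)%:num).
rewrite -!ge0_integral_mscale //; apply: eq_measure_integral => A mA _.
change ((fine (mu S1))%:E * mu (X @^-1` A `&` S12) =
        (fine (mu S12))%:E * mu (X @^-1` A `&` S1)).
by rewrite !fineK // muleC cross // muleC.
Qed.

End restricted_pushforward.

Section unit_interval_random_variables.
Variables (R : realType) (d : measure_display) (Omega : measurableType d).
Variable P : probability Omega R.

Definition rv01 (f : Omega -> R) :=
  measurable_fun setT f /\ forall w, 0 <= f w <= 1.

Lemma rv01M (f g : Omega -> R) : rv01 f -> rv01 g -> rv01 (fun w => f w * g w).
Proof.
move=> [mf f01] [mg g01]; split => [|w]; first exact: measurable_funM.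
by have /andP[? ?] := f01 w; have /andP[? ?] := g01 w; rewrite mulr_ge0 ?mulr_ile1.
Qed.

Lemma rv01_compl (f : Omega -> R) : rv01 f -> rv01 (fun w => 1 - f w).
Proof.
move=> [mf f01]; split => [|w]; first exact: measurable_funB.
by have /andP[? ?] := f01 w; rewrite subr_ge0 gerBl andbC.
Qed.

Lemma rv01_integral_fin_num (S : set Omega) (f : Omega -> R) :
  measurable S -> rv01 f -> (\int[P]_(w in S) (f w)%:E)%E \is a fin_num.
Proof.
move=> mS [mf f01].
have f_ge0 w : (0 <= (f w)%:E)%E by rewrite lee_fin; case/andP: (f01 w).
rewrite ge0_fin_numE ?integral_ge0 //.
apply: (@le_lt_trans _ _ (\int[P]_(w in S) (cst 1%E) w)%E).
  apply: ge0_le_integral => // [|w _]; last by rewrite lee_fin; case/andP: (f01 w).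
  by apply/measurable_EFinP; exact: measurable_funS mf.
by rewrite integral_cst // mul1e (le_lt_trans (probability_le1 P mS)) ?ltry.
Qed.

Lemma fine_integral_ge0 (S : set Omega) (f : Omega -> R) :
  (forall w, 0 <= f w) -> 0 <= fine (\int[P]_(w in S) (f w)%:E)%E.
Proof. by move=> f_ge0; rewrite fine_ge0 // integral_ge0 // => w _; rewrite lee_fin. Qed.

Lemma rv01_le_fine_integral (S S' : set Omega) (f g : Omega -> R) :
  measurable S -> measurable S' -> S `<=` S' -> rv01 f -> rv01 g ->
  (forall w, f w <= g w) ->
  fine (\int[P]_(w in S) (f w)%:E)%E <= fine (\int[P]_(w in S') (g w)%:E)%E.
Proof.
move=> mS mS' SS' f01 g01 fg; rewrite -lee_fin !fineK ?rv01_integral_fin_num //.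
case: f01 g01 => [mf f01] [mg g01].
have mEg : measurable_fun S' (fun w => (g w)%:E).
  by apply/measurable_EFinP; exact: measurable_funS mg.
apply: (@le_trans _ _ (\int[P]_(w in S) (g w)%:E)%E).
  apply: ge0_le_integral => // [w _|||w _]; rewrite ?lee_fin //.
  - by case/andP: (f01 w).
  - by apply/measurable_EFinP; exact: measurable_funS mf.
  - exact: measurable_funS mEg.
apply: ge0_subset_integral => // w _.
by rewrite lee_fin; case/andP: (g01 w).
Qed.

Lemma rv01_sum_fine_integral (I : finType) (S : set Omega) (F : I -> Omega -> R)
    (g : Omega -> R) :
  measurable S -> (forall i, rv01 (F i)) -> rv01 g ->
  (forall w, \sum_i F i w = g w) ->
  \sum_i fine (\int[P]_(w in S) (F i w)%:E)%E = fine (\int[P]_(w in S) (g w)%:E)%E.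
Proof.
move=> mS F01 g01 Fg; apply: EFin_inj.
rewrite EFin_sum_fine => [|i _]; last exact: rv01_integral_fin_num.
rewrite fineK ?rv01_integral_fin_num // -ge0_integral_sum //.
- by apply: eq_integral => w _; rewrite sumEFin Fg.
- move=> i; have [mF _] := F01 i.
  by apply/measurable_EFinP; exact: measurable_funS mF.
- by move=> i w _; have [_ /(_ w)/andP[]] := F01 i; rewrite lee_fin.
Qed.

(* [1 - f] is a nonnegative function with zero integral on [S]. *)
Lemma rv01_integral_eq_measure_ae (S : set Omega) (f : Omega -> R) :
  measurable S -> rv01 f -> (\int[P]_(w in S) (f w)%:E)%E = P S ->
  {ae P, forall w, S w -> f w = 1}.
Proof.
move=> mS f01 intf; have [mcf cf01] := rv01_compl f01.
have mEcf : measurable_fun S (fun w => (1 - f w)%:E).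
  by apply/measurable_EFinP; exact: measurable_funS mcf.
have int_compl0 : (\int[P]_(w in S) (1 - f w)%:E)%E = 0%E.
  have PSE : P S = (P S + \int[P]_(w in S) (1 - f w)%:E)%E.
    rewrite -[in RHS]intf -ge0_integralD // => [|w _||w _].
    - rewrite (eq_integral (cst 1%E)) ?integral_cst ?mul1e // => w _.
      by rewrite -EFinD addrC subrK.
    - by rewrite lee_fin; case/andP: (f01.2 w).
    - by apply/measurable_EFinP; exact: measurable_funS f01.1.
    - by rewrite lee_fin; case/andP: (cf01 w).
  have PS_fin := fin_num_measure P S mS.
  by rewrite -[LHS](addeK _ PS_fin) [_ + P S]addeC -PSE subee.
have := (ae_eq_integral_abs P mS mEcf).1.
rewrite (eq_integral (fun w => (1 - f w)%:E)) => [/(_ int_compl0)|w _]; last first.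
  by rewrite gee0_abs // lee_fin; case/andP: (cf01 w).
apply: filterS => w compl0 Sw; apply/esym/subr0_eq/EFin_inj; exact: compl0.
Qed.

End unit_interval_random_variables.

Section noisy_labels.
Variables (R : realType) (d : measure_display) (Omega : measurableType d).
Variables (P : probability Omega R) (dX : measure_display) (Xd : measurableType dX).
Variables (C : nat) (X : Omega -> Xd) (Y Yt : Omega -> 'I_C).
Hypothesis mX : measurable_fun setT X.
Hypothesis mY : forall y, measurable [set w | Y w = y].
Hypothesis mYt : forall y, measurable [set w | Yt w = y].
Hypothesis indep_noise : cond_indep_X_Yt P X Y Yt.
Hypothesis informative : Tmx P Y Yt \in unitmx.

Lemma classifier_rv01 (h : Xd -> 'I_C -> R) c :
  is_classifier h -> rv01 (fun w => h (X w) c).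
Proof.
move=> h_cls; split => [|w]; last exact: classifier_le1.
by case: h_cls => _ _ mh; exact: measurableT_comp (mh c) mX.
Qed.

Lemma PrhZE (h : Xd -> 'I_C -> R) (Z : Omega -> 'I_C) c z :
  is_classifier h -> measurable [set w | Z w = z] ->
  (PrhZ P X h Z c z)%:E = (\int[P]_(w in [set w | Z w = z]) (h (X w) c)%:E)%E.
Proof.
by move=> h_cls mZ; rewrite /PrhZ fineK // rv01_integral_fin_num //; exact: classifier_rv01.
Qed.

Lemma sum_PrhZ (h : Xd -> 'I_C -> R) (Z : Omega -> 'I_C) z :
  is_classifier h -> measurable [set w | Z w = z] ->
  \sum_c PrhZ P X h Z c z = fine (P [set w | Z w = z]).
Proof.
move=> h_cls mZ; rewrite (rv01_sum_fine_integral (g := cst 1) P mZ) //.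
- by rewrite (eq_integral (cst 1%E)) ?integral_cst ?mul1e.
- by move=> c; exact: classifier_rv01.
- by split => [|w]; [exact: measurable_cst | rewrite /= ler01 lexx].
- by case: h_cls.
Qed.

Definition prY y := fine (P [set w | Y w = y]).

Lemma prY_neq0 y : prY y != 0.
Proof.
apply/negP => /eqP prY0; move: informative; rewrite unitmxE unitfE.
rewrite (expand_det_row _ y) big1 ?eqxx // => j _.
by rewrite mxE -/(prY y) prY0 invr0 mulr0 mul0r.
Qed.

Lemma indep_noise_preimage y yt A : measurable A ->
  (P (X @^-1` A `&` [set w | Y w = y /\ Yt w = yt]) * P [set w | Y w = y] =
   P (X @^-1` A `&` [set w | Y w = y]) * P [set w | Y w = y /\ Yt w = yt])%E.
Proof.
have setXE (Q : Omega -> Prop) :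
    [set w | X w \in A /\ Q w] = X @^-1` A `&` [set w | Q w].
  by apply/seteqP; split => w /= [] /[!inE].
by move=> mA; have := indep_noise y yt mA; rewrite !setXE.
Qed.

Lemma Qmx_noisy (h : Xd -> 'I_C -> R) : is_classifier h ->
  Qmx P X h Yt = Qmx P X h Y *m Tmx P Y Yt.
Proof.
move=> h_cls; apply/matrixP => c yt; rewrite !mxE.
under eq_bigr do rewrite !mxE.
apply: EFin_inj; rewrite PrhZE //.
have -> : [set w | Yt w = yt] =
    \big[setU/set0]_(y <- index_enum 'I_C) [set w | Y w = y /\ Yt w = yt].
  rewrite -bigcup_seq; apply/seteqP; split => [w /= e|w [y _ [_ e]]] //.
  by exists (Y w) => //=; rewrite mem_index_enum.
have mYYt y : measurable [set w | Y w = y /\ Yt w = yt] by exact: measurableI (mY y) (mYt yt).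
have [mhc hc01] := classifier_rv01 c h_cls.
rewrite ge0_integral_bigsetU //; last 4 first.
- exact: index_enum_uniq.
- apply/trivIsetP => i j _ _ ij; apply/seteqP; split => // w [[Yi _] [Yj _]].
  by move: ij; rewrite -Yi -Yj eqxx.
- by apply/measurable_EFinP; exact: measurable_funS mhc.
- by move=> w _; rewrite lee_fin; case/andP: (hc01 w).
rewrite -sumEFin; apply: eq_bigr => y _.
have [h_ge0 _ mh] := h_cls.
have := ge0_integral_comp_cross_mul mX (mY y) (mYYt y)
  (fin_num_measure P _ (mY y)) (fin_num_measure P _ (mYYt y))
  (indep_noise_preimage y yt) (mh c) (h_ge0^~ c).
move=> /(congr1 fine); rewrite !fineM ?fin_num_measure ?rv01_integral_fin_num //.
rewrite -(fineK (rv01_integral_fin_num P (mYYt y) (classifier_rv01 c h_cls))).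
by move=> h_cross; rewrite /PrhZ mulrA -h_cross mulfK ?prY_neq0.
Qed.

Definition condmx (h : Xd -> 'I_C -> R) : 'M[R]_C :=
  \matrix_(y, c) (Qmx P X h Y c y / prY y).

Lemma trQmx_true (h : Xd -> 'I_C -> R) :
  (Qmx P X h Y)^T = diag_mx (\row_y prY y) *m condmx h.
Proof.
by apply/matrixP => y c; rewrite mul_diag_mx !mxE mulrC divfK ?prY_neq0.
Qed.

Lemma condmx_ge0 (h : Xd -> 'I_C -> R) : is_classifier h ->
  forall y c, 0 <= condmx h y c.
Proof.
move=> h_cls y c; rewrite !mxE divr_ge0 ?fine_integral_ge0 ?fine_ge0 //.
by move=> w; case/andP: (classifier_le1 h_cls (X w) c).
Qed.

Lemma condmx_rowsum1 (h : Xd -> 'I_C -> R) : is_classifier h ->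
  forall y, \sum_c condmx h y c = 1.
Proof.
move=> h_cls y; under eq_bigr do rewrite !mxE.
by rewrite -mulr_suml sum_PrhZ // divff ?prY_neq0.
Qed.

Lemma Qmx_ground_truth (hs : Xd -> 'I_C -> R) : is_classifier hs ->
  {ae P, forall w, hs (X w) (Y w) = 1} -> Qmx P X hs Y = diag_mx (\row_y prY y).
Proof.
move=> hs_cls hs_true; apply/matrixP => c y; rewrite !mxE.
have [mhs _] := classifier_rv01 c hs_cls.
have mEhs z : measurable_fun [set w | Y w = z] (fun w => (hs (X w) c)%:E).
  by apply/measurable_EFinP; exact: measurable_funS mhs.
apply: EFin_inj; rewrite PrhZE //; have [<-|cNy] := eqVneq c y.
  rewrite mulr1n (ae_eq_integral (cst 1%E)) //.
    by rewrite integral_cst // mul1e fineK ?fin_num_measure.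
  by apply: filterS hs_true => w hs1 /= Yw; rewrite -Yw hs1.
rewrite mulr0n (ae_eq_integral (cst 0%E)) ?integral0 //.
apply: filterS hs_true => w hs1 /= Yw.
by rewrite (classifier_eq0 hs_cls hs1) // Yw.
Qed.

Lemma ground_truth_perm (h hs : Xd -> 'I_C -> R) (s : 'S_C) :
  is_classifier h -> is_classifier hs -> {ae P, forall w, hs (X w) (Y w) = 1} ->
  (forall y c, condmx h y c = (s y == c)%:R) ->
  {ae P, forall w, forall c, h (X w) (s c) = hs (X w) c}.
Proof.
move=> h_cls hs_cls hs_true condmx_perm.
have h_sY y : {ae P, forall w, Y w = y -> h (X w) (s y) = 1}.
  apply: rv01_integral_eq_measure_ae (mY y) (classifier_rv01 _ h_cls) _.
  have := condmx_perm y (s y); rewrite eqxx !mxE => /(congr1 (fun t => t * prY y)).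
  by rewrite divfK ?prY_neq0 // mul1r -PrhZE // => ->; rewrite fineK ?fin_num_measure.
apply: filterS2 (filter_forall _ h_sY) hs_true => w h_s hs1 c.
have h1 := h_s (Y w) erefl.
have [->|cNY] := eqVneq c (Y w); first by rewrite h1 hs1.
rewrite (classifier_eq0 h_cls h1) ?(classifier_eq0 hs_cls hs1) //.
by rewrite (inj_eq perm_inj).
Qed.

Definition garblingmx (h h' : Xd -> 'I_C -> R) : 'M[R]_C :=
  \matrix_(c', c) (fine (\int[P]_(w in setT) (h (X w) c * h' (X w) c')%:E)%E /
                   fine (\int[P]_(w in setT) (h (X w) c)%:E)%E).

Lemma Qmx_garbling (h h' : Xd -> 'I_C -> R) :
  is_classifier h -> is_classifier h' -> cond_indep_h'_Y P X Y h h' ->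
  Qmx P X h' Y = garblingmx h h' *m Qmx P X h Y.
Proof.
move=> h_cls h'_cls indep; apply/matrixP => c' y; rewrite !mxE.
under eq_bigr do rewrite !mxE.
have hh'01 c := rv01M (classifier_rv01 c h_cls) (classifier_rv01 c' h'_cls).
rewrite /PrhZ -(rv01_sum_fine_integral P (mY y) hh'01 (classifier_rv01 c' h'_cls));
  last by move=> w; rewrite -mulr_suml; case: h_cls => _ -> _; rewrite mul1r.
apply: eq_bigr => c _; have := indep c c' y.
have [Ph0|Ph_neq0] := eqVneq (fine (\int[P]_(w in setT) (h (X w) c)%:E))%E 0.
  move=> _; rewrite Ph0 invr0 mulr0 mul0r; apply/le_anti.
  rewrite fine_integral_ge0 ?andbT => [|w]; last by case/andP: ((hh'01 c).2 w).
  rewrite -Ph0; apply: (rv01_le_fine_integral P (mY y) measurableT (subsetT _)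
    (hh'01 c) (classifier_rv01 c h_cls)) => w.
  have /andP[hc_ge0 _] := classifier_le1 h_cls (X w) c.
  by have /andP[_ h'c'_le1] := classifier_le1 h'_cls (X w) c'; rewrite ler_piMr.
by move=> indep_c; rewrite mulrAC -indep_c mulfK.
Qed.

Lemma norm_det_garblingmx_le1 (h h' : Xd -> 'I_C -> R) :
  is_classifier h -> is_classifier h' -> `|\det (garblingmx h h')| <= 1.
Proof.
move=> h_cls h'_cls; rewrite -det_tr; apply: norm_det_le1 => [c c'|c].
  rewrite !mxE divr_ge0 // fine_integral_ge0 // => w.
    by case/andP: ((rv01M (classifier_rv01 c h_cls) (classifier_rv01 c' h'_cls)).2 w).
  by case/andP: (classifier_le1 h_cls (X w) c).
under eq_bigr do rewrite !mxE.
rewrite -mulr_suml (rv01_sum_fine_integral P measurableT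
  (fun c' => rv01M (classifier_rv01 c h_cls) (classifier_rv01 c' h'_cls))
  (classifier_rv01 c h_cls)); last first.
  by move=> w; rewrite -mulr_sumr; case: h'_cls => _ -> _; rewrite mulr1.
have [->|Ph_neq0] := eqVneq (fine (\int[P]_(w in setT) (h (X w) c)%:E))%E 0.
  by rewrite mul0r ler01.
by rewrite divff.
Qed.

Lemma LDMI_noisy_shift (h : Xd -> 'I_C -> R) : is_classifier h ->
  LDMI (Qmx P X h Yt) = (LDMI (Qmx P X h Y) + (- ln `|\det (Tmx P Y Yt)|)%:E)%E.
Proof. by move=> h_cls; rewrite Qmx_noisy // LDMI_mulmx // -unitfE -unitmxE. Qed.

Lemma prod_prY_gt0 : 0 < \prod_y prY y.
Proof. by apply: prodr_gt0 => y _; rewrite lt_def prY_neq0 fine_ge0. Qed.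

Lemma norm_det_Qmx_noisy (h : Xd -> 'I_C -> R) : is_classifier h ->
  `|\det (Qmx P X h Yt)| =
  (\prod_y prY y) * `|\det (Tmx P Y Yt)| * `|\det (condmx h)|.
Proof.
move=> h_cls; rewrite Qmx_noisy // det_mulmx -det_tr trQmx_true det_mulmx det_diag.
under eq_bigr do rewrite mxE.
by rewrite !normrM ger0_norm ?(ltW prod_prY_gt0) // mulrAC.
Qed.

Lemma LDMI_legal (hs h : Xd -> 'I_C -> R) :
  is_classifier hs -> {ae P, forall w, hs (X w) (Y w) = 1} -> is_classifier h ->
  (LDMI (Qmx P X hs Yt) <= LDMI (Qmx P X h Yt))%E /\
  (~ (exists pi : {perm 'I_C},
        {ae P, forall w, forall c, h (X w) (pi c) = hs (X w) c}) ->
   (LDMI (Qmx P X hs Yt) < LDMI (Qmx P X h Yt))%E).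
Proof.
move=> hs_cls hs_true h_cls.
have detT_gt0 : 0 < `|\det (Tmx P Y Yt)| by rewrite normr_gt0 -unitfE -unitmxE.
have norm_det_hs : `|\det (Qmx P X hs Yt)| = (\prod_y prY y) * `|\det (Tmx P Y Yt)|.
  rewrite Qmx_noisy // Qmx_ground_truth // det_mulmx det_diag normrM.
  by under eq_bigr do rewrite mxE; rewrite ger0_norm ?(ltW prod_prY_gt0).
have condmx_le1 : `|\det (condmx h)| <= 1.
  by apply: norm_det_le1 => [|y]; [exact: condmx_ge0 | rewrite condmx_rowsum1].
split; first by apply: LDMI_le; rewrite norm_det_Qmx_noisy // norm_det_hs ler_piMr
  ?mulr_ge0 ?(ltW prod_prY_gt0) ?(ltW detT_gt0).
move=> not_perm; apply: LDMI_lt.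
rewrite norm_det_Qmx_noisy // norm_det_hs gtr_pMr ?mulr_gt0 ?prod_prY_gt0 // ltNge.
apply/negP => /(stochastic_norm_det_ge1_perm (condmx_ge0 h_cls) (condmx_rowsum1 h_cls)).
by move=> [s condmx_s]; apply: not_perm; exists s; exact: ground_truth_perm.
Qed.

Lemma LDMI_information_monotone (h h' : Xd -> 'I_C -> R) :
  is_classifier h -> is_classifier h' -> cond_indep_h'_Y P X Y h h' ->
  (LDMI (Qmx P X h Yt) <= LDMI (Qmx P X h' Yt))%E.
Proof.
move=> h_cls h'_cls indep; apply: LDMI_le.
rewrite (Qmx_noisy h'_cls) (Qmx_garbling h_cls) // -mulmxA -Qmx_noisy //.
by rewrite det_mulmx normrM ler_piMl ?norm_det_garblingmx_le1.
Qed.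

End noisy_labels.

Unset Implicit Arguments.

Theorem theorem4p1 (R : realType) (d : measure_display) (Omega : measurableType d)
  (P : probability Omega R) (dX : measure_display) (Xd : measurableType dX)
  (C : nat) (X : Omega -> Xd) (Y Yt : Omega -> 'I_C)
  (mX : measurable_fun setT X)
  (mY : forall y, measurable [set w | Y w = y])
  (mYt : forall y, measurable [set w | Yt w = y])
  (indep_noise : cond_indep_X_Yt P X Y Yt)
  (informative : Tmx P Y Yt \in unitmx) :
  (* 1. legal *)
  (forall hs : Xd -> 'I_C -> R, is_classifier hs ->
     {ae P, forall w, hs (X w) (Y w) = 1} ->
     forall h : Xd -> 'I_C -> R, is_classifier h ->
       (LDMI (Qmx P X hs Yt) <= LDMI (Qmx P X h Yt))%E /\
       (~ (exists pi : {perm 'I_C},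
             {ae P, forall w, forall c, h (X w) (pi c) = hs (X w) c}) ->
        (LDMI (Qmx P X hs Yt) < LDMI (Qmx P X h Yt))%E)) /\
  (* 2. noise-robust *)
  (forall h : Xd -> 'I_C -> R, is_classifier h ->
     ((forall h' : Xd -> 'I_C -> R, is_classifier h' ->
         (LDMI (Qmx P X h Yt) <= LDMI (Qmx P X h' Yt))%E) <->
      (forall h' : Xd -> 'I_C -> R, is_classifier h' ->
         (LDMI (Qmx P X h Y) <= LDMI (Qmx P X h' Y))%E))) /\
  (exists alpha : R, forall h : Xd -> 'I_C -> R, is_classifier h ->
     LDMI (Qmx P X h Yt) = (LDMI (Qmx P X h Y) + alpha%:E)%E) /\
  (* 3. information-monotone *)
  (forall h h' : Xd -> 'I_C -> R, is_classifier h -> is_classifier h' ->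
     cond_indep_h'_Y P X Y h h' ->
     (LDMI (Qmx P X h Yt) <= LDMI (Qmx P X h' Yt))%E).
Proof.
have shift := LDMI_noisy_shift mX mY mYt indep_noise informative.
split; [|split; [|split]].
- by move=> hs hs_cls hs_true h h_cls; exact: LDMI_legal.
- move=> h h_cls; split=> h_min h' h'_cls; have := h_min h' h'_cls.
    by rewrite !shift // leeD2rE.
  by rewrite !shift // leeD2rE.
- by exists (- ln `|\det (Tmx P Y Yt)|); exact: shift.
- by move=> h h' h_cls h'_cls; exact: LDMI_information_monotone.
Qed.
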